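(* The following hold. (1) $\alpha_*(\Sigma^* )=\mathcal Q$ and $\alpha_{\le\omega}(\Sigma^{\le\omega})=\mathcal C$ (top elements are preserved); $\alpha_*(\emptyset)=\emptyset$ and $\alpha_{\le\omega}(\emptyset)=\emptyset$. (2) For $U,U'\subseteq\Sigma^*$ and $V,V'\subseteq\Sigma^{\le\omega}$: $\alpha_*(U\cup U')=\alpha_*(U)\cup\alpha_*(U')$ and $\alpha_{\le\omega}(V\cup V')=\alpha_{\le\omega}(V)\cup\alpha_{\le\omega}(V')$. (3) $\alpha_*(U\cdot U')=\alpha_*(U)\cdot\alpha_*(U')$ and $\alpha_{\le\omega}(U\cdot V)=\alpha_*(U)\cdot\alpha_{\le\omega}(V)$. (4) If $n\ge1$, $\Phi$ is a monotone operator on $\mathcal P(\Sigma^* )^n$, $F$ is a monotone operator on $\mathcal M_*^n$, and $\alpha_*\circ\Phi=F\circ\alpha_*$ (with $\alpha_*$ applied componentwise), then $\alpha_*(\mathrm{lfp}(\Phi))=\mathrm{lfp}(F)$. (5) For every $U\subseteq\Sigma^*$: $\alpha_{\le\omega}(U^\omega)=\alpha_*(U)^\omega$.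
   Context: $\Sigma$ is a finite alphabet, $\Sigma^{\le\omega}=\Sigma^*\cup\Sigma^\omega$; concatenation $w\cdot u$ equals $wu$ if $w$ is finite and $w$ if $w$ is infinite, extended pointwise to languages. For $A\subseteq\Sigma^*$, $A^\omega$ is the set of all words $w_0w_1w_2\cdots$ with $w_i\in A$, and $CD^\omega$ means $C\cdot D^\omega$. Fix an extended Büchi automaton $\mathfrak A=(Q,\Sigma,\delta,q_0,F)$ (finite states, $\delta:Q\times\Sigma\to\mathcal P(Q)$, initial $q_0$, final $F$). For $w\in\Sigma^*$ write $p\overset{w}{\leadsto}q$ if $q$ is reachable from $p$ reading $w$, and $p\overset{w}{\leadsto}_F q$ if there are $q''\in F$, $w=uv$ with $p\overset{u}{\leadsto}q''\overset{v}{\leadsto}q$. For $w,u\in\Sigma^+$, $w\sim u$ iff for all $p,q$: $p\overset{w}{\leadsto}q\Leftrightarrow p\overset{u}{\leadsto}q$ and $p\overset{w}{\leadsto}_Fq\Leftrightarrow p\overset{u}{\leadsto}_Fq$. $\mathcal Q=\Sigma^+/{\sim}\uplus\{[\epsilon]\}$ with $[\epsilon]=\{\epsilon\}$; concatenation of classes is well defined. Let $\mathcal C=\{(C,D)\mid C,D\in\mathcal Q,\ CD=C,\ DD=D\}$. Define $\mathfrak f(V)=\{(C,D)\in\mathcal C\mid CD^\omega\cap V\neq\emptyset\}$ and $\mathfrak g(\mathcal V)=\bigcup_{(C,D)\in\mathcal V}CD^\omega$; closure $\mathfrak c(\mathcal V)=\bigcup_{n\ge1}(\mathfrak f\circ\mathfrak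 g)^n(\mathcal V)$. $\mathcal M_{\le\omega}=\{\mathfrak c(\mathfrak f(V))\mid V\subseteq\Sigma^{\le\omega}\}$, $\mathcal M_*=\mathcal P(\mathcal Q)$, ordered by inclusion. $\alpha_*(U)=\{C\in\mathcal Q\mid C\cap U\neq\emptyset\}$, $\alpha_{\le\omega}(V)=\mathfrak c(\mathfrak f(V))$, $\gamma_*(\mathcal U)=\bigcup_{C\in\mathcal U}C$, $\gamma_{\le\omega}(\mathcal V)=\mathfrak g(\mathcal V)$. Abstract operations: for $\mathcal U,\mathcal U'\in\mathcal M_*$, $\mathcal U\cdot\mathcal U'=\{CC'\mid C\in\mathcal U,C'\in\mathcal U'\}$; for $\mathcal U\in\mathcal M_*$, $\mathcal V\in\mathcal M_{\le\omega}$, $\mathcal U\cdot\mathcal V=\{(AC,D)\mid A\in\mathcal U,(C,D)\in\mathcal V\}$; for $\mathcal U\in\mathcal M_*$, $\mathcal U^\omega:=\alpha_{\le\omega}(\gamma_*(\mathcal U)^\omega)$. *)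

From mathcomp Require Import all_boot.
Set Implicit Arguments. Unset Strict Implicit. Unset Printing Implicit Defensive.

Inductive word (Sigma : Type) : Type :=
  | Fin of seq Sigma
  | Inf of (nat -> Sigma).
Arguments Fin {Sigma}. Arguments Inf {Sigma}.

Definition lfp (I A : Type) (Phi : (I -> A -> Prop) -> I -> A -> Prop)
  : I -> A -> Prop :=
  fun i a => forall X : I -> A -> Prop,
      (forall j b, Phi X j b -> X j b) -> X i a.

Definition monotone_op (I A : Type) (Phi : (I -> A -> Prop) -> I -> A -> Prop) :=
  forall X Y : I -> A -> Prop, (forall i a, X i a -> Y i a) ->
    forall i a, Phi X i a -> Phi Y i a.

Section Words.
Variable Sigma : Type.
Definition lang := seq Sigma -> Prop.
Definition olang := word Sigma -> Prop.

Definition app (u : seq Sigma) (w : word Sigma) : word Sigma :=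
  match w with
  | Fin v => Fin (u ++ v)
  | Inf x => Inf (fun n => if n < size u then nth (x 0) u n else x (n - size u))
  end.

Definition catF (U U' : lang) : lang :=
  fun w => exists u u', [/\ U u, U' u' & w = u ++ u'].

Definition catL (U : lang) (V : olang) : olang :=
  fun w => exists u v, [/\ U u, V v & w = app u v].

Definition pref (ws : nat -> seq Sigma) (N : nat) : seq Sigma :=
  flatten [seq ws i | i <- iota 0 N].

Definition concat_inf (ws : nat -> seq Sigma) (w : word Sigma) : Prop :=
  match w with
  | Fin u => exists N, (forall i, N <= i -> ws i = [::]) /\ u = pref ws N
  | Inf x => (forall N, exists2 i, N <= i & ws i <> [::]) /\
             (forall N j, j < size (pref ws N) -> nth (x j) (pref ws N) j = x j)
  end.

Definition omega (A : lang) : olang :=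
  fun w => exists ws : nat -> seq Sigma, (forall i, A (ws i)) /\ concat_inf ws w.
End Words.

Section Automaton.
Local Unset Implicit Arguments.
Variables (Sigma Q : finType) (delta : Q -> Sigma -> {set Q}) (F : {set Q}).

Fixpoint reach (p : Q) (w : seq Sigma) (q : Q) : bool :=
  match w with
  | [::] => p == q
  | a :: w' => [exists r in delta p a, reach r w' q]
  end.

Definition reachF (p : Q) (w : seq Sigma) (q : Q) : Prop :=
  exists u v q'', [/\ w = u ++ v, q'' \in F, reach p u q'' & reach q'' v q].

Definition sim (w u : seq Sigma) : Prop :=
  [/\ w <> [::], u <> [::] &
      forall p q, (reach p w q <-> reach p u q) /\ (reachF p w q <-> reachF p u q)].

Definition clsL (w : seq Sigma) : lang Sigma :=
  if w is [::] then (fun u => u = [::]) else sim w.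

(* elements of \mathcal Q: the ~-classes of nonempty words and [eps] *)
Definition isClass (C : lang Sigma) : Prop :=
  C = (fun u => u = [::]) \/ exists w, w <> [::] /\ C = sim w.

Lemma clsL_isClass w : isClass (clsL w).
Proof. case: w => [|a w]; [by left | right; by exists (a :: w)]. Qed.

Definition Cls := {C : lang Sigma | isClass C}.

Definition cls (w : seq Sigma) : Cls := exist _ (clsL w) (clsL_isClass w).

Definition mulC (C D E : Cls) : Prop :=
  exists c d, [/\ proj1_sig C c, proj1_sig D d & E = cls (c ++ d)].

Definition cw (p : Cls * Cls) : olang Sigma :=
  catL (proj1_sig p.1) (omega (proj1_sig p.2)).

Definition calC (p : Cls * Cls) : Prop := mulC p.1 p.2 p.1 /\ mulC p.2 p.2 p.2.

Definition fV (V : olang Sigma) : Cls * Cls -> Prop :=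
  fun p => calC p /\ exists w, cw p w /\ V w.

Definition gV (VV : Cls * Cls -> Prop) : olang Sigma :=
  fun w => exists p, VV p /\ cw p w.

Definition closure (VV : Cls * Cls -> Prop) : Cls * Cls -> Prop :=
  fun p => exists n, iter n.+1 (fun X => fV (gV X)) VV p.

Definition alphaS (U : lang Sigma) : Cls -> Prop :=
  fun C => exists u, proj1_sig C u /\ U u.

Definition alphaW (V : olang Sigma) : Cls * Cls -> Prop := closure (fV V).

Definition gammaS (UU : Cls -> Prop) : lang Sigma :=
  fun w => exists C, UU C /\ proj1_sig C w.

Definition gammaW (VV : Cls * Cls -> Prop) : olang Sigma := gV VV.

Definition mulM (UU UU' : Cls -> Prop) : Cls -> Prop :=
  fun E => exists C C', [/\ UU C, UU' C' & mulC C C' E].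

Definition mulMW (UU : Cls -> Prop) (VV : Cls * Cls -> Prop) : Cls * Cls -> Prop :=
  fun p => exists A C, [/\ UU A, VV (C, p.2) & mulC A C p.1].

Definition omegaM (UU : Cls -> Prop) : Cls * Cls -> Prop :=
  alphaW (omega (gammaS UU)).

End Automaton.
Arguments reach {Sigma Q} delta p w q.
Arguments reachF {Sigma Q} delta F p w q.
Arguments sim {Sigma Q} delta F w u.
Arguments clsL {Sigma Q} delta F w _.
Arguments isClass {Sigma Q} delta F C.
Arguments Cls {Sigma Q} delta F.
Arguments cls {Sigma Q} delta F w.
Arguments mulC {Sigma Q} delta F C D E.
Arguments cw {Sigma Q} delta F p _.
Arguments calC {Sigma Q} delta F p.
Arguments fV {Sigma Q} delta F V p.
Arguments gV {Sigma Q} delta F VV _.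
Arguments closure {Sigma Q} delta F VV p.
Arguments alphaS {Sigma Q} delta F U C.
Arguments alphaW {Sigma Q} delta F V _.
Arguments gammaS {Sigma Q} delta F UU _.
Arguments gammaW {Sigma Q} delta F VV _.
Arguments mulM {Sigma Q} delta F UU UU' E.
Arguments mulMW {Sigma Q} delta F UU VV p.
Arguments omegaM {Sigma Q} delta F UU _.

(* Two words are ~-equivalent iff they have the same finite
   "signature" [sigw]: emptiness plus, for every pair of states, the two bits
   p -w-> q and p -w->_F q.  Signatures are compatible with concatenation, so
   the classes form a monoid and a class is determined by any representative
   ([memE]).  Hence alpha_* commutes with unions and products elementwise,
   and (4) is the transfer of least fixpoints along the Galois insertion
   formed by alpha_* and gamma_*.
   Membership in C D^omega is made concrete: an infinite word lies in
   C D^omega iff it splits at increasing cut points into a C-prefix followed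
   by D-blocks ([cwInf]).  The closure defining alpha_{<=omega} is handled by
   an induction principle ([alphaW_ind]): a pair enters the closure either
   directly from V or by sharing a word with a pair already in it.  Parts (2)
   and (3) follow by this induction, using that prefixing a word and splitting
   off a prefix act on pairs through class multiplication ([cw_prefix],
   [cw_split]).  For (5) the key is a Ramsey-type argument ([ramsey_cuts]):
   any infinite word in C D^omega, cut along the block boundaries of a
   factorisation w = w_0 w_1 ..., admits a subsequence of these boundaries
   between which all segments fall into one idempotent class X; replacing each
   w_i by an equivalent word of U then keeps the word in C' X^omega. *)

From mathcomp Require Import all_boot zify.
From Stdlib Require Import FunctionalExtensionality PropExtensionality.
From Stdlib Require Import ProofIrrelevance ClassicalEpsilon Classical.
Set Implicit Arguments. Unset Strict Implicit. Unset Printing Implicit Defensive.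

Lemma pred_ext (A : Type) (P R : A -> Prop) : (forall x, P x <-> R x) -> P = R.
Proof.
move=> PR; apply: functional_extensionality => x.
exact: propositional_extensionality.
Qed.

Lemma lfp_fold (I A : Type) (Phi : (I -> A -> Prop) -> I -> A -> Prop) :
  monotone_op Phi -> forall i a, Phi (lfp Phi) i a -> lfp Phi i a.
Proof.
move=> monoPhi i a Phia X preX; apply: (preX); apply: monoPhi Phia => j b lfpb.
exact: lfpb X preX.
Qed.

Lemma cat_eq_cat (T : Type) (a b u v : seq T) : a ++ b = u ++ v ->
  (exists m, a = u ++ m /\ v = m ++ b) \/ (exists m, u = a ++ m /\ b = m ++ v).
Proof.
elim: a u => [|x a IH] [|y u] /= E.
- by left; exists [::].
- by right; exists (y :: u).
- by left; exists (x :: a).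
- case: E => <- /IH [[m [-> ->]]|[m [-> ->]]]; [left|right]; by exists m.
Qed.

Lemma cat_cancel (T : Type) (s a b : seq T) : s ++ a = s ++ b -> a = b.
Proof. by elim: s => //= x s IH [] /IH. Qed.

Lemma infinite_pigeonhole (T : finType) (f : nat -> T) :
  exists t, forall N, exists2 m, N <= m & f m = t.
Proof.
apply: NNPP => none.
have bounded t : exists N, forall m, N <= m -> f m <> t.
  apply: NNPP => unbounded; apply: none; exists t => N; apply: NNPP => noN.
  by apply: unbounded; exists N => m Nm fm; apply: noN; exists m.
have [N HN] := choice _ bounded.
exact: (HN (f (\max_t N t)) (\max_t N t) (leq_bigmax _)).
Qed.

Lemma extract_subsequence (P : nat -> Prop) (h : nat -> nat) :
  (forall N, exists2 m, N <= m & P m) ->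
  exists g : nat -> nat, (forall j, P (g j)) /\ (forall j, h (g j) <= g j.+1).
Proof.
move=> infP; have [next Hnext] : exists next : nat -> nat,
    forall N, N <= next N /\ P (next N).
  by apply: (choice (fun N m => N <= m /\ P m)) => N; have [m] := infP N; exists m.
exists (fun j => iter j (next \o h) (next 0)); split.
- by case=> [|j]; exact: (Hnext _).2.
- by move=> j; exact: (Hnext _).1.
Qed.

Lemma nondecr_le (B : nat -> nat) : (forall i, B i <= B i.+1) ->
  forall i j, i <= j -> B i <= B j.
Proof. exact: homo_leq leqnn leq_trans. Qed.

Lemma incr_lt (B : nat -> nat) : (forall i, B i < B i.+1) ->
  forall i j, i < j -> B i < B j.
Proof. exact: homo_ltn ltn_trans. Qed.

Lemma incr_ge (B : nat -> nat) : (forall i, B i < B i.+1) -> forall i, i <= B i.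
Proof. by move=> incB; elim=> // i IH; exact: leq_ltn_trans IH (incB i). Qed.

Lemma incr_le (B : nat -> nat) : (forall i, B i < B i.+1) ->
  forall i j, i <= j -> B i <= B j.
Proof. by move=> incB; apply: nondecr_le => i; exact: ltnW. Qed.

Section Segments.
Variable T : Type.
Implicit Types (z x : nat -> T) (ws : nat -> seq T).

Definition seg z i j : seq T := [seq z k | k <- iota i (j - i)].

Lemma size_seg z i j : size (seg z i j) = j - i.
Proof. by rewrite size_map size_iota. Qed.

Lemma seg_nil z i j : seg z i j = [::] <-> j <= i.
Proof. by rewrite -subn_eq0 -(size_seg z); split=> [->|/nilP]. Qed.

Lemma seg_cat z i j k : i <= j -> j <= k -> seg z i j ++ seg z j k = seg z i k.
Proof.
move=> ij jk; rewrite /seg -map_cat -{2}(subnKC ij) -iotaD.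
by congr (map _ (iota _ _)); lia.
Qed.

Lemma nth_seg z i j d n : n < j - i -> nth d (seg z i j) n = z (i + n).
Proof. by move=> n_lt; rewrite (nth_map 0) ?size_iota // nth_iota. Qed.

Lemma seg_shift z x m a b : (forall n, z (m + n) = x n) ->
  seg z (m + a) (m + b) = seg x a b.
Proof. by move=> zx; rewrite /seg subnDl iotaDl -map_comp; apply: eq_map. Qed.

Lemma pref_S ws N : pref ws N.+1 = pref ws N ++ ws N.
Proof. by rewrite /pref -addn1 iotaD map_cat flatten_cat /= cats0. Qed.

Lemma pref_add ws N k :
  pref ws (N + k) = pref ws N ++ flatten [seq ws i | i <- iota N k].
Proof. by rewrite /pref iotaD map_cat flatten_cat. Qed.

Lemma pref_mono ws N M : N <= M -> exists t, pref ws M = pref ws N ++ t.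
Proof. by move=> NM; rewrite -(subnKC NM) pref_add; eexists. Qed.

Lemma size_pref_mono ws N M : N <= M -> size (pref ws N) <= size (pref ws M).
Proof. by move=> /(pref_mono ws)[t ->]; rewrite size_cat leq_addr. Qed.

Lemma pref_nil ws : (forall i, ws i = [::]) -> forall N, pref ws N = [::].
Proof. by move=> ws0; elim=> // N IH; rewrite pref_S IH ws0. Qed.

Lemma pref_unbounded ws : (forall N, exists2 i, N <= i & ws i <> [::]) ->
  forall n, exists N, n < size (pref ws N).
Proof.
move=> infws; elim=> [|n [N HN]].
- have [i _ wsi] := infws 0; exists i.+1; rewrite pref_S size_cat.
  by case: (ws i) wsi => // *; rewrite addnS.
- have [i Ni wsi] := infws N; exists i.+1; rewrite pref_S size_cat.
  have := size_pref_mono ws Ni; case: (ws i) wsi => //= a w _ le_pref.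
  by rewrite addnS ltnS (leq_trans HN (leq_trans le_pref (leq_addr _ _))).
Qed.

Lemma concat_inf_ex ws : (forall N, exists2 i, N <= i & ws i <> [::]) ->
  exists z, concat_inf ws (Inf z).
Proof.
move=> infws; have unb := pref_unbounded infws.
have [i0 _] := infws 0; case: (ws i0) => [//|a0 w0] _.
pose K n := ex_minn (unb n).
exists (fun n => nth a0 (pref ws (K n)) n); split => // N j j_lt.
have jK : j < size (pref ws (K j)) by rewrite /K; case: ex_minnP.
case: (leqP N (K j)) => NK.
- have [t ->] := pref_mono ws NK; rewrite nth_cat j_lt.
  exact: set_nth_default.
- have [t ->] := pref_mono ws (ltnW NK); rewrite nth_cat jK.
  exact: set_nth_default.
Qed.

Section Concat.
Variables (ws : nat -> seq T) (z : nat -> T).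
Hypothesis wsz : concat_inf ws (Inf z).

Lemma concat_pref N : pref ws N = seg z 0 (size (pref ws N)).
Proof.
apply: (@eq_from_nth _ (z 0)); first by rewrite size_seg subn0.
move=> j j_lt; rewrite nth_seg ?subn0 //.
by rewrite (set_nth_default (z j)) // wsz.2.
Qed.

Lemma concat_blocks k l : k <= l ->
  seg z (size (pref ws k)) (size (pref ws l))
  = flatten [seq ws i | i <- iota k (l - k)].
Proof.
move=> kl; apply: (@cat_cancel _ (pref ws k)).
rewrite -pref_add subnKC // [RHS]concat_pref {1}(concat_pref k).
by rewrite seg_cat ?size_pref_mono.
Qed.

Lemma concat_block k : ws k = seg z (size (pref ws k)) (size (pref ws k.+1)).
Proof. by rewrite concat_blocks // subSnn /= cats0. Qed.

End Concat.

Lemma pref_seg z (B : nat -> nat) : (forall i, B i <= B i.+1) ->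
  forall N, pref (fun i => seg z (B i) (B i.+1)) N = seg z (B 0) (B N).
Proof.
move=> nondecB; elim=> [|N IH]; first by apply/esym/seg_nil.
by rewrite pref_S IH seg_cat //; apply: nondecr_le.
Qed.

Lemma concat_cuts z (B : nat -> nat) : (forall i, B i < B i.+1) ->
  concat_inf (fun i => seg z (B i) (B i.+1)) (Inf (fun n => z (B 0 + n))).
Proof.
move=> incB; split=> [N|N j].
  by exists N => //; move/seg_nil; rewrite leqNgt incB.
rewrite pref_seg => [|i]; last exact: ltnW.
by rewrite size_seg => j_lt; rewrite nth_seg.
Qed.

Definition appf (u : seq T) x : nat -> T :=
  fun n => if n < size u then nth (x 0) u n else x (n - size u).

Lemma app_Inf u x : app u (Inf x) = Inf (appf u x).
Proof. by []. Qed.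

Lemma appf_shift u x n : appf u x (size u + n) = x n.
Proof. by rewrite /appf ltnNge leq_addr /= addKn. Qed.

Lemma appf_pref u x : seg (appf u x) 0 (size u) = u.
Proof.
apply: (@eq_from_nth _ (x 0)); first by rewrite size_seg subn0.
move=> j; rewrite size_seg subn0 => j_lt; rewrite nth_seg ?subn0 //= /appf j_lt.
exact: set_nth_default.
Qed.

Lemma appf_seg u x i j : size u <= i ->
  seg (appf u x) i j = seg x (i - size u) (j - size u).
Proof.
move=> ui; case: (leqP j i) => ij.
- by rewrite (iffRL (seg_nil _ _ _) ij) (iffRL (seg_nil _ _ _) (leq_sub2r _ ij)).
- rewrite -{1}(subnKC ui) -{1}(subnKC (ltnW (leq_ltn_trans ui ij))).
  by apply: seg_shift => n; exact: appf_shift.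
Qed.

Lemma appf_seg0 u x i : size u <= i -> seg (appf u x) 0 i = u ++ seg x 0 (i - size u).
Proof. by move=> ui; rewrite -(@seg_cat _ 0 (size u)) // appf_pref appf_seg // subnn. Qed.

Lemma appf_seg_split z m : appf (seg z 0 m) (fun n => z (m + n)) = z.
Proof.
apply: functional_extensionality => n; rewrite /appf size_seg subn0.
by case: ltnP => nm; [rewrite nth_seg ?subn0|rewrite subnKC].
Qed.

Lemma app_cat (u c : seq T) (v : word T) : app u (app c v) = app (u ++ c) v.
Proof.
case: v => [v|x] /=; first by rewrite catA.
congr Inf; apply: functional_extensionality => n; rewrite size_cat nth_cat.
case: (ltnP n (size u)) => nu.
- by rewrite ltn_addr //; apply: set_nth_default.
- by rewrite subnDA -ltn_subLR.
Qed.

End Segments.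

Section Automaton.
Variables (Sigma Q : finType) (delta : Q -> Sigma -> {set Q}) (F : {set Q}).
Local Notation reach := (reach delta).
Local Notation reachF := (reachF delta F).
Local Notation Cls := (Cls delta F).
Local Notation cls := (cls delta F).
Local Notation mulC := (mulC delta F).
Local Notation cw := (cw delta F).
Local Notation calC := (calC delta F).
Local Notation fV := (fV delta F).
Local Notation alphaS := (alphaS delta F).
Local Notation alphaW := (alphaW delta F).

Lemma reach_cat p u v q : reach p (u ++ v) q = [exists r, reach p u r && reach r v q].
Proof.
elim: u p => [|a u IH] p /=.
  apply/idP/existsP => [vq|[r /andP[/eqP-> //]]].
  by exists p; rewrite eqxx.
apply/existsP/existsP => [[r /andP[ar]]|[s /andP[/existsP[r /andP[ar ur]] vq]]].
  rewrite IH => /existsP[s /andP[us vq]]; exists s; rewrite vq andbT.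
  by apply/existsP; exists r; rewrite ar.
by exists r; rewrite ar IH; apply/existsP; exists s; rewrite ur.
Qed.

Lemma reach_catP p u v q :
  reach p (u ++ v) q <-> exists r, reach p u r /\ reach r v q.
Proof.
rewrite reach_cat; split=> [/existsP[r /andP]|[r /andP rr]]; first by exists r.
by apply/existsP; exists r.
Qed.

Lemma reachF_cat p u v q : reachF p (u ++ v) q <->
  exists r, (reachF p u r /\ reach r v q) \/ (reach p u r /\ reachF r v q).
Proof.
split.
- move=> [a [b [q'' [E Fq'' pa bq]]]].
  case: (cat_eq_cat (esym E)) => [[m [Ea Ev]]|[m [Eu Eb]]].
  + move: pa; rewrite Ea => /reach_catP[r [ur mr]].
    by exists r; right; split => //; exists m, b, q''.
  + move: bq; rewrite Eb => /reach_catP[r [mr vq]].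
    by exists r; left; split => //; exists a, m, q''.
- move=> [r [[[a [m [q'' [E Fq'' pa mr]]]] vq]|[ur [m [b [q'' [E Fq'' rm bq]]]]]]].
  + exists a, (m ++ v), q''; split => //; first by rewrite E catA.
    by apply/reach_catP; exists r.
  + exists (u ++ m), b, q''; split => //; first by rewrite E catA.
    by apply/reach_catP; exists r.
Qed.

Definition reachFb p w q := [exists i : 'I_(size w).+1,
  [exists r in F, reach p (take i w) r && reach r (drop i w) q]].

Lemma reachFP p w q : reachF p w q <-> reachFb p w q.
Proof.
split.
- move=> [u [v [r [-> Fr ur vq]]]].
  have ltu : size u < (size (u ++ v)).+1 by rewrite ltnS size_cat leq_addr.
  apply/existsP; exists (Ordinal ltu); apply/existsP; exists r.
  by rewrite /= take_size_cat // drop_size_cat // Fr ur vq.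
- move=> /existsP[i /existsP[r /andP[Fr /andP[ur vq]]]].
  by exists (take i w), (drop i w), r; rewrite cat_take_drop.
Qed.

(* The signature of a word: a value in a finite type that determines its
   ~-class (two words are equivalent iff their signatures agree). *)
Definition sigw w : bool * {ffun Q * Q -> bool * bool} :=
  (nilp w, [ffun pq => (reach pq.1 w pq.2, reachFb pq.1 w pq.2)]).

Lemma sigwP w u : sigw w = sigw u <->
  [/\ nilp w = nilp u, forall p q, reach p w q = reach p u q
    & forall p q, reachF p w q <-> reachF p u q].
Proof.
split.
- case=> nilwu /ffunP sig; split=> // p q; have := sig (p, q); rewrite !ffunE.
    by case.
  by case=> _; rewrite !reachFP => ->.
- case=> nilwu rwu rFwu; congr pair => //; apply/ffunP => -[p q].
  by rewrite !ffunE /= rwu; congr pair; apply/idP/idP => /reachFP/rFwu/reachFP.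
Qed.

Lemma sigw_cat u u' v v' : sigw u = sigw u' -> sigw v = sigw v' ->
  sigw (u ++ v) = sigw (u' ++ v').
Proof.
move=> /sigwP[nilu ru rFu] /sigwP[nilv rv rFv]; apply/sigwP; split.
- by rewrite !cat_nilp nilu nilv.
- by move=> p q; rewrite !reach_cat; apply: eq_existsb => r; rewrite ru rv.
- move=> p q; rewrite !reachF_cat.
  by split=> -[r H]; exists r; move: H; rewrite !ru !rv rFu rFv.
Qed.

Definition inC (C : Cls) w : Prop := proj1_sig C w.

Lemma Cls_inj (C D : Cls) : proj1_sig C = proj1_sig D -> C = D.
Proof.
case: C D => [L pL] [L' pL'] /= E; subst L'.
by rewrite (proof_irrelevance _ pL pL').
Qed.

Lemma clsLE w : clsL delta F w = fun u => sigw w = sigw u.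
Proof.
apply: pred_ext => u; case: w => [|a w] /=.
  by split=> [->|/sigwP[]] //; case: u.
split=> [[_ u0 rwu]|/sigwP[nilwu rwu rFwu]].
  apply/sigwP; split=> [|p q|p q]; last exact: (rwu p q).2.
    by case: (u) u0.
  by apply/idP/idP => /(rwu p q).1.
by split=> // [u0|p q]; [move: nilwu; rewrite u0|rewrite rwu rFwu].
Qed.

Lemma isClass_clsL (L : lang Sigma) : isClass delta F L -> exists w, L = clsL delta F w.
Proof. by case=> [->|[w [w0 ->]]]; [exists [::]|exists w; case: w w0]. Qed.

Lemma mem_cls w u : inC (cls w) u <-> sigw w = sigw u.
Proof. by rewrite /inC /= clsLE. Qed.

Lemma mem_cls_self w : inC (cls w) w.
Proof. exact/mem_cls. Qed.

Lemma cls_eq w u : cls w = cls u <-> sigw w = sigw u.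
Proof.
split=> [E|E]; first by apply/mem_cls; rewrite E; exact: mem_cls_self.
by apply: Cls_inj; rewrite /= !clsLE E.
Qed.

Lemma memE C c : inC C c -> C = cls c.
Proof.
case: C => L pL; rewrite /inC /= => Lc; apply: Cls_inj => /=.
have [w EL] := isClass_clsL pL; move: Lc; rewrite EL !clsLE => wc.
by apply: pred_ext => u; rewrite wc.
Qed.

Lemma cls_surj C : exists c, C = cls c.
Proof.
case: C => L pL; have [w EL] := isClass_clsL pL; exists w.
by apply: Cls_inj; rewrite /= EL.
Qed.

Lemma cls_mem C : exists c, inC C c.
Proof. by have [c ->] := cls_surj C; exists c; exact: mem_cls_self. Qed.

Lemma cls_nil w : cls w = cls [::] <-> w = [::].
Proof. by split=> [/cls_eq/sigwP[]|->//]; case: w. Qed.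

Lemma mem_cls_nil w : inC (cls [::]) w -> w = [::].
Proof. by move/memE/esym/cls_nil. Qed.

Lemma cls_cat w w' u u' : cls w = cls w' -> cls u = cls u' ->
  cls (w ++ u) = cls (w' ++ u').
Proof. by move=> /cls_eq ww' /cls_eq uu'; apply/cls_eq/sigw_cat. Qed.

Lemma cls_flatten (us ws : nat -> seq Sigma) : (forall i, cls (us i) = cls (ws i)) ->
  forall s, cls (flatten (map us s)) = cls (flatten (map ws s)).
Proof. by move=> usws; elim=> //= i s IH; apply: cls_cat. Qed.

Lemma mulC_cls c d : mulC (cls c) (cls d) (cls (c ++ d)).
Proof. by exists c, d; split => //; apply: mem_cls_self. Qed.

Lemma mulCE C D E c d : mulC C D E -> inC C c -> inC D d -> E = cls (c ++ d).
Proof.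
move=> [c' [d' [Cc' Dd' ->]]] Cc Dd.
by apply: cls_cat; [rewrite -(memE Cc') (memE Cc)|rewrite -(memE Dd') (memE Dd)].
Qed.

Lemma mulC_ex C D : exists E, mulC C D E.
Proof. by have [[c ->] [d ->]] := (cls_surj C, cls_surj D); eexists; exact: mulC_cls. Qed.

Lemma mulC_clsE c d E : mulC (cls c) (cls d) E <-> E = cls (c ++ d).
Proof.
by split=> [H|->]; [exact: mulCE H (mem_cls_self _) (mem_cls_self _)|exact: mulC_cls].
Qed.

Lemma mulC_mem C D E c d : mulC C D E -> inC C c -> inC D d -> inC E (c ++ d).
Proof. by move=> CDE Cc Dd; rewrite (mulCE CDE Cc Dd); exact: mem_cls_self. Qed.

Definition cuts (C D : Cls) (z : nat -> Sigma) := exists B : nat -> nat,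
  [/\ forall i, B i < B i.+1, inC C (seg z 0 (B 0))
    & forall i, inC D (seg z (B i) (B i.+1))].

Lemma omega_blocks_nonempty D ws z : (forall i, inC D (ws i)) ->
  concat_inf ws (Inf z) -> forall i, ws i <> [::].
Proof.
move=> Dws [infws _] i wsi; have [i0 _] := infws 0; apply.
by apply: mem_cls_nil; rewrite -wsi -(memE (Dws i)).
Qed.

Lemma cwInf C D z : cw (C, D) (Inf z) <-> cuts C D z.
Proof.
split.
- case=> c [[v|x] [Cc [ws [Dws wsx]] //]]; rewrite app_Inf => -[->].
  have ne := omega_blocks_nonempty Dws wsx.
  exists (fun i => size c + size (pref ws i)); split.
  + move=> i; rewrite ltn_add2l pref_S size_cat -[X in X < _]addn0 ltn_add2l.
    by rewrite lt0n size_eq0; apply/eqP/ne.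
  + by rewrite addn0 appf_pref.
  + move=> i; rewrite (@seg_shift _ _ x) => [|n]; last exact: appf_shift.
    rewrite -(concat_block wsx); exact: Dws.
- case=> B [incB CB DB]; exists (seg z 0 (B 0)), (Inf (fun n => z (B 0 + n))).
  split=> //; last by rewrite app_Inf appf_seg_split.
  by exists (fun i => seg z (B i) (B i.+1)); split=> //; exact: concat_cuts.
Qed.

Lemma cwFin C D u : cw (C, D) (Fin u) <-> D = cls [::] /\ inC C u.
Proof.
split.
- case=> c [[v|x] [Cc [ws [Dws wsv]] //= [uE]]].
  case: wsv => N [wsN vE].
  have D0 : D = cls [::] by rewrite -(wsN N) //; exact: memE (Dws N).
  have ws0 i : ws i = [::] by apply: mem_cls_nil; rewrite -D0; exact: Dws.
  by rewrite uE vE pref_nil // cats0.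
- case=> -> Cu; exists u, (Fin [::]); split=> //=; last by rewrite cats0.
  by exists (fun=> [::]); split=> //; exists 0.
Qed.

Lemma calC_ne p : calC p -> exists w, cw p w.
Proof.
case: p => C D _; have [[c ->] [[|a d] ->]] := (cls_surj C, cls_surj D).
  by exists (Fin c); apply/cwFin; split=> //; exact: mem_cls_self.
have [x ax] : exists x, concat_inf (fun _ => a :: d) (Inf x).
  by apply: concat_inf_ex => N; exists N.
exists (app c (Inf x)), c, (Inf x); split=> //; first exact: mem_cls_self.
by exists (fun _ => a :: d); split=> // _; exact: mem_cls_self.
Qed.

Lemma cuts_shift E D z : calC (E, D) -> cuts E D z -> forall N, exists B : nat -> nat,
  [/\ forall i, B i < B i.+1, forall i, N <= B i, forall k, inC E (seg z 0 (B k))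
    & forall i, inC D (seg z (B i) (B i.+1))].
Proof.
move=> [EDE _] [B [incB EB DB]] N.
have EBk k : inC E (seg z 0 (B k)).
  elim: k => [//|k IH]; rewrite -(@seg_cat _ z 0 (B k)) //; last exact: ltnW.
  exact: mulC_mem EDE IH (DB k).
exists (fun i => B (N + i)); split=> [i|i|//|i]; rewrite ?addnS //.
exact: leq_trans (incr_ge incB N) (incr_le incB (leq_addr _ _)).
Qed.

Lemma cw_prefix C D E u w : cw (C, D) w -> mulC (cls u) C E -> cw (E, D) (app u w).
Proof.
move=> [c [v [Cc Dv ->]]] uCE; exists (u ++ c), v; split=> //; last exact: app_cat.
exact: mulC_mem uCE (mem_cls_self u) Cc.
Qed.

Lemma calC_mul A C D E : calC (C, D) -> mulC A C E -> calC (E, D).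
Proof.
have [[a ->] [[c ->] [d ->]]] := (cls_surj A, (cls_surj C, cls_surj D)).
move=> [/mulC_clsE CD DD] /mulC_clsE ->; split=> //; apply/mulC_clsE.
by rewrite -catA; apply: cls_cat.
Qed.

Lemma cw_replace E D x x' t : calC (E, D) -> cw (E, D) (app x t) ->
  cls x = cls x' -> cw (E, D) (app x' t).
Proof.
move=> ED; case: t => [t|y].
  move=> /cwFin [D0 Ext] xx'; apply/cwFin; split=> //.
  by rewrite (memE Ext) (@cls_cat x x' t t) //; exact: mem_cls_self.
rewrite !app_Inf => /cwInf cut xx'; apply/cwInf.
have [B [incB geB EB DB]] := cuts_shift ED cut (size x).
exists (fun i => B i - size x + size x'); split.
- by move=> i; rewrite ltn_add2r ltn_sub2rE.
- rewrite appf_seg0 ?leq_addl // addnK (memE (EB 0)) appf_seg0 //.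
  by apply/mem_cls/cls_eq; apply: cls_cat.
- by move=> i; rewrite appf_seg ?leq_addl // !addnK -appf_seg.
Qed.

Lemma cw_split E D u v : calC (E, D) -> cw (E, D) (app u v) ->
  exists C, [/\ calC (C, D), cw (C, D) v & mulC (cls u) C E].
Proof.
move=> ED; case: v => [v|x].
  move=> /cwFin [D0 Euv]; exists (cls v); split.
  - by rewrite D0; split; apply/mulC_clsE; rewrite cats0.
  - by apply/cwFin; split=> //; exact: mem_cls_self.
  - by rewrite (memE Euv); exact: mulC_cls.
rewrite app_Inf => /cwInf cut.
have [B [incB geB EB DB]] := cuts_shift ED cut (size u).
set z := appf u x in EB DB.
have blockE i : seg z (B i) (B i.+1) = seg x (B i - size u) (B i.+1 - size u).
  exact: appf_seg.
have prefE : seg x 0 (B 1 - size u) = seg x 0 (B 0 - size u) ++ seg z (B 0) (B 1).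
  by rewrite blockE seg_cat // leq_sub2r // ltnW.
exists (cls (seg x 0 (B 1 - size u))); split.
- split; last exact: ED.2.
  rewrite /= (memE (DB 1)); apply/mulC_clsE; rewrite prefE -catA.
  apply: cls_cat => //.
  by rewrite -(memE (DB 0)) -(memE (mulC_mem ED.2 (DB 0) (DB 1))).
- apply/cwInf; exists (fun i => B i.+1 - size u); split=> [i||i].
  + by rewrite ltn_sub2rE.
  + exact: mem_cls_self.
  + by rewrite -blockE.
- by rewrite (memE (EB 1)) /z appf_seg0 //; exact: mulC_cls.
Qed.

Lemma alphaW_base V p : fV V p -> alphaW V p.
Proof.
move=> [Cp [w [pw Vw]]]; exists 0; split=> //.
by exists w; split=> //; exists p; split=> //; split=> //; exists w.
Qed.

Lemma alphaW_step V p p' w : alphaW V p' -> calC p -> cw p w -> cw p' w -> alphaW V p.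
Proof.
move=> [n p'n] Cp pw p'w; exists n.+1; split=> //.
by exists w; split=> //; exists p'.
Qed.

Lemma alphaW_ind V (S : Cls * Cls -> Prop) : (forall p, fV V p -> S p) ->
  (forall p p' w, S p' -> calC p -> cw p w -> cw p' w -> S p) ->
  forall p, alphaW V p -> S p.
Proof.
move=> base step p [n]; elim: n.+1 p => [|k IH] p /=; first exact: base.
by move=> [Cp [w [pw [p' [p'k p'w]]]]]; exact: step (IH _ p'k) Cp pw p'w.
Qed.

Lemma alphaW_mono V V' : (forall w, V w -> V' w) -> forall p, alphaW V p -> alphaW V' p.
Proof.
move=> VV'; apply: alphaW_ind => [p [Cp [w [pw Vw]]]|p p' w]; last exact: alphaW_step.
by apply: alphaW_base; split=> //; exists w; split=> //; exact: VV'.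
Qed.

Lemma alpha_top_bot :
  [/\ alphaS (fun _ => True) = (fun _ => True), alphaW (fun _ => True) = calC,
      alphaS (fun _ => False) = (fun _ => False)
    & alphaW (fun _ => False) = (fun _ => False)].
Proof.
split; apply: pred_ext => x; split=> //.
- by move=> _; have [c Cc] := cls_mem x; exists c.
- by apply: alphaW_ind => // p [].
- by move=> Cx; have [w xw] := calC_ne Cx; apply: alphaW_base; split=> //; exists w.
- by case=> u [].
- by move: x; apply: alphaW_ind => [p [_ [w [_ []]]]|].
Qed.

Lemma alpha_union (U U' : lang Sigma) (V V' : olang Sigma) :
  alphaS (fun w => U w \/ U' w) = (fun C => alphaS U C \/ alphaS U' C) /\
  alphaW (fun w => V w \/ V' w) = (fun p => alphaW V p \/ alphaW V' p).
Proof.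
split; apply: pred_ext => x; split.
- by case=> u [Cu [Uu|U'u]]; [left|right]; exists u.
- by case=> -[u [Cu Uu]]; exists u; split=> //; [left|right].
- move: x; apply: alphaW_ind => [p [Cp [w [pw [Vw|V'w]]]]|p p' w [H|H] Cp pw p'w].
  + by left; apply: alphaW_base; split=> //; exists w.
  + by right; apply: alphaW_base; split=> //; exists w.
  + by left; exact: alphaW_step H Cp pw p'w.
  + by right; exact: alphaW_step H Cp pw p'w.
- by case; apply: alphaW_mono => w H; [left|right].
Qed.

Lemma alphaS_cat (U U' : lang Sigma) :
  alphaS (catF U U') = mulM delta F (alphaS U) (alphaS U').
Proof.
apply: pred_ext => E; split.
- case=> w [Ew [u [u' [Uu U'u wE]]]].
  exists (cls u), (cls u'); split.
  + by exists u; split=> //; exact: mem_cls_self.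
  + by exists u'; split=> //; exact: mem_cls_self.
  + by rewrite (memE Ew) wE; exact: mulC_cls.
- case=> C [C' [[u [Cu Uu]] [u' [C'u' U'u']] CC'E]].
  by exists (u ++ u'); split; [exact: mulC_mem CC'E Cu C'u'|exists u, u'].
Qed.

Lemma alphaS_gammaS (UU : Cls -> Prop) : alphaS (gammaS delta F UU) = UU.
Proof.
apply: pred_ext => C; split=> [[u [Cu [C' [UC' C'u]]]]|UC].
  by rewrite (memE Cu) -(memE C'u).
by have [c Cc] := cls_mem C; exists c; split=> //; exists C.
Qed.

Lemma gammaS_alphaS (U : lang Sigma) w : U w -> gammaS delta F (alphaS U) w.
Proof. by move=> Uw; have ww := mem_cls_self w; exists (cls w); split=> //; exists w. Qed.

Lemma alphaS_lfp (n : nat) (Phi : ('I_n -> lang Sigma) -> 'I_n -> lang Sigma)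
    (Fop : ('I_n -> Cls -> Prop) -> 'I_n -> Cls -> Prop) :
  monotone_op Phi -> monotone_op Fop ->
  (forall X, (fun i => alphaS (Phi X i)) = Fop (fun i => alphaS (X i))) ->
  (fun i => alphaS (lfp Phi i)) = lfp Fop.
Proof.
move=> monoPhi monoF comm; apply: functional_extensionality => i.
apply: pred_ext => C; split.
- case=> u [Cu lfp_u]; rewrite (memE Cu).
  pose G j := gammaS delta F (lfp Fop j).
  suff : G i u by case=> C' [lfpC' C'u]; rewrite -(memE C'u).
  (* G is a pre-fixpoint of Phi *)
  apply: (lfp_u G) => j b PhiGb; exists (cls b); split; last exact: mem_cls_self.
  apply: (lfp_fold monoF); apply: (monoF (fun k => alphaS (G k))).
    by move=> k D; rewrite alphaS_gammaS.
  by rewrite -comm /=; exists b; split=> //; exact: mem_cls_self.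
- (* alpha_* (lfp Phi) is a pre-fixpoint of Fop *)
  move=> lfpC; apply: (lfpC (fun k => alphaS (lfp Phi k))) => j D.
  rewrite -(comm (lfp Phi)) => -[u [Du Phiu]].
  by exists u; split=> //; exact: (lfp_fold monoPhi).
Qed.

Lemma alphaW_catL_sub (U : lang Sigma) (V : olang Sigma) p :
  alphaW (catL U V) p -> mulMW delta F (alphaS U) (alphaW V) p.
Proof.
move: p; apply: alphaW_ind.
  move=> [E D] [ED [w [EDw [u [v [Uu Vv wE]]]]]]; move: EDw; rewrite wE.
  move=> /(cw_split ED)[C [CD CDv uCE]]; exists (cls u), C; split=> //.
    by exists u; split=> //; exact: mem_cls_self.
  by apply: alphaW_base; split=> //; exists v.
move=> [E D] [E' D'] w [A [C' [[u [Au Uu]] C'D' AC'E']]] ED EDw E'D'w /=.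
have [c' C'c'] := cls_mem C'.
case: E'D'w => x [t [E'x D't wE]].
(* w = x . t with [x] = E' = [u c'], so u . (c' . t) still lies in E D^omega *)
have EDy : cw (E, D) (app u (app c' t)).
  rewrite app_cat; apply: (@cw_replace _ _ x) => //; first by rewrite -wE.
  by rewrite -(memE E'x) (mulCE AC'E' Au C'c').
have [C [CD CDc't uCE]] := cw_split ED EDy.
exists A, C; split; [by exists u| |by rewrite (memE Au)].
by apply: (alphaW_step C'D' CD CDc't); exists c', t.
Qed.

Lemma alphaW_catL_sup (U : lang Sigma) (V : olang Sigma) p :
  mulMW delta F (alphaS U) (alphaW V) p -> alphaW (catL U V) p.
Proof.
case: p => [E D] [A [C [[u [Au Uu]] CD uCE]]] /=; rewrite (memE Au) in uCE.
suff prefix_u : forall q, alphaW V q -> forall E, mulC (cls u) q.1 E ->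
    alphaW (catL U V) (E, q.2) by exact: prefix_u (C, D) CD E uCE.
apply: alphaW_ind.
  move=> [C' D'] [C'D' [v [C'D'v Vv]]] E' uC'E' /=; apply: alphaW_base; split.
    exact: calC_mul C'D' uC'E'.
  by exists (app u v); split; [exact: cw_prefix C'D'v uC'E'|exists u, v].
move=> [C1 D1] [C2 D2] w IH C1D1 C1D1w C2D2w E1 uC1E1 /=.
have [E2 uC2E2] := mulC_ex (cls u) C2.
apply: (@alphaW_step _ _ (E2, D2) (app u w)).
- exact: IH E2 uC2E2.
- exact: calC_mul C1D1 uC1E1.
- exact: cw_prefix C1D1w uC1E1.
- exact: cw_prefix C2D2w uC2E2.
Qed.

Lemma idem_seg D z (P : nat -> nat) : mulC D D D -> (forall i, P i < P i.+1) ->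
  (forall i, inC D (seg z (P i) (P i.+1))) ->
  forall i j, i < j -> inC D (seg z (P i) (P j)).
Proof.
move=> DD incP DP i j /subnKC <-; elim: (j - i.+1) => [|n IH]; first by rewrite addn0.
rewrite addnS -(@seg_cat _ z (P i) (P (i.+1 + n))); last exact: ltnW.
  exact: mulC_mem DD IH (DP _).
by apply: incr_le => //; lia.
Qed.

(* Interleave the D-cuts P with the
   boundaries Bw so that the segment from each D-cut to the next boundary has
   a fixed signature; then the class of the segment between the j-th and j'-th
   chosen boundary no longer depends on j' > j + 1. *)
Lemma stable_boundaries D z (P Bw : nat -> nat) : mulC D D D ->
  (forall i, P i < P i.+1) -> (forall i, inC D (seg z (P i) (P i.+1))) ->
  (forall n, exists k, n < Bw k) ->
  exists kb : nat -> nat, (forall j, Bw (kb j) < Bw (kb j.+1)) /\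
    forall j j', j.+1 < j' -> cls (seg z (Bw (kb j)) (Bw (kb j')))
                              = cls (seg z (Bw (kb j)) (Bw (kb j.+2))).
Proof.
move=> DD incP DP unbBw.
have [k beyond] := choice _ unbBw.
pose beta m := Bw (k (P m)).
have [s infs] := infinite_pigeonhole (fun m => sigw (seg z (P m) (beta m))).
have [g [gs gap]] := extract_subsequence beta infs.
pose p j := P (g j); pose b j := beta (g j).
(* the chosen cuts and boundaries interleave: p 0 < b 0 <= p 1 < b 1 <= ... *)
have pb j : p j < b j by exact: beyond.
have bp j : b j <= p j.+1 by exact: leq_trans (gap j) (incr_ge incP _).
have incg j : g j < g j.+1.
  exact: leq_ltn_trans (incr_ge incP (g j)) (leq_trans (pb j) (gap j)).
exists (fun j => k (P (g j))); split=> [j|j j' jj'].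
  exact: leq_ltn_trans (bp j) (pb j.+1).
(* b j .. b j1 splits into b j .. p (j+1), a D-segment, and a segment of
   signature s *)
have split3 j1 : j.+1 < j1 -> seg z (b j) (b j1)
    = seg z (b j) (p j.+1) ++ (seg z (p j.+1) (p j1) ++ seg z (p j1) (b j1)).
  move=> jj1; have pp : p j.+1 <= p j1.
    by apply: (incr_le incP); exact: (incr_le incg (ltnW jj1)).
  by rewrite !seg_cat // ?(leq_trans pp) // ltnW.
rewrite -/(b j) -/(b j') -/(b j.+2) (split3 _ jj') split3 //.
apply: cls_cat => //; apply: cls_cat.
  rewrite -(memE (idem_seg DD incP DP (incr_lt incg jj'))).
  by rewrite -(memE (idem_seg DD incP DP (incg _))).
by apply/cls_eq; rewrite /p /b !gs.
Qed.

Lemma uniform_subsequence z (b : nat -> nat) :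
  (forall j j', j.+1 < j' -> cls (seg z (b j) (b j')) = cls (seg z (b j) (b j.+2))) ->
  exists (io : nat -> nat) (X : Cls), (forall a, io a < io a.+1) /\
    forall a a', a < a' -> inC X (seg z (b (io a)) (b (io a'))).
Proof.
move=> stab.
have [s infs] := infinite_pigeonhole (fun j => sigw (seg z (b j) (b j.+2))).
have [io [ios gap]] := extract_subsequence (fun j => j.+2) infs.
have incio a : io a < io a.+1 by exact: ltnW (gap a).
exists io, (cls (seg z (b (io 0)) (b (io 0).+2))); split=> // a a' aa'.
have far : (io a).+1 < io a' by exact: leq_trans (gap a) (incr_le incio aa').
by apply/mem_cls/cls_eq; rewrite (stab _ _ far); apply/cls_eq; rewrite !ios.
Qed.

Lemma ramsey_cuts D z (P Bw : nat -> nat) : mulC D D D -> (forall i, P i < P i.+1) ->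
  (forall i, inC D (seg z (P i) (P i.+1))) -> (forall k, Bw k <= Bw k.+1) ->
  (forall n, exists k, n < Bw k) ->
  exists (kap : nat -> nat) (X : Cls), [/\ forall a, kap a < kap a.+1,
    forall a, Bw (kap a) < Bw (kap a.+1)
    & forall a a', a < a' -> inC X (seg z (Bw (kap a)) (Bw (kap a')))].
Proof.
move=> DD incP DP nondecBw unbBw.
have [kb [incb stab]] := stable_boundaries DD incP DP unbBw.
have [io [X [incio unifX]]] := @uniform_subsequence z (fun j => Bw (kb j)) stab.
have incbio a : Bw (kb (io a)) < Bw (kb (io a.+1)).
  exact: (@incr_lt (fun j => Bw (kb j)) incb _ _ (incio a)).
exists (fun a => kb (io a)), X; split=> // a.
by rewrite ltnNge; apply/negP => /(nondecr_le nondecBw); rewrite leqNgt incbio.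
Qed.

Lemma uniform_cuts z (B : nat -> nat) X : (forall a, B a < B a.+1) ->
  (forall a a', a < a' -> inC X (seg z (B a) (B a'))) ->
  calC (cls (seg z 0 (B 1)), X) /\ cw (cls (seg z 0 (B 1)), X) (Inf z).
Proof.
move=> incB unifX.
have B01 := ltnW (incB 0); have B12 := ltnW (incB 1).
have X01 := unifX 0 1 isT; have X12 := unifX 1 2 isT; have X02 := unifX 0 2 isT.
split; first split=> /=.
- exists (seg z 0 (B 1)), (seg z (B 1) (B 2)); split=> //; first exact: mem_cls_self.
  rewrite seg_cat // -(@seg_cat _ z 0 (B 0) (B 1)) // -(@seg_cat _ z 0 (B 0) (B 2)) //.
    by apply: cls_cat => //; rewrite -(memE X01) (memE X02).
  exact: leq_trans B01 B12.
- exists (seg z (B 0) (B 1)), (seg z (B 1) (B 2)); split=> //.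
  by rewrite seg_cat // (memE X02).
- apply/cwInf; exists (fun a => B a.+1); split=> // [|a]; first exact: mem_cls_self.
  exact: unifX.
Qed.

Lemma omega_transfer E D (ws us : nat -> seq Sigma) z z' : calC (E, D) ->
  cw (E, D) (Inf z) -> concat_inf ws (Inf z) -> concat_inf us (Inf z') ->
  (forall i, cls (us i) = cls (ws i)) ->
  exists p', [/\ calC p', cw p' (Inf z) & cw p' (Inf z')].
Proof.
move=> ED /cwInf[P [incP _ DP]] zws z'us clsus.
pose Bw k := size (pref ws k); pose Bu k := size (pref us k).
have [kap [X [inckap incB unifX]]] := ramsey_cuts ED.2 incP DP
  (fun k => size_pref_mono ws (leqnSn k)) (pref_unbounded zws.1).
have [CX zCX] := uniform_cuts incB unifX.
have blocks k l : k <= l -> cls (seg z' (Bu k) (Bu l)) = cls (seg z (Bw k) (Bw l)).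
  by move=> kl; rewrite (concat_blocks z'us kl) (concat_blocks zws kl); exact: cls_flatten.
have prefix k : cls (seg z' 0 (Bu k)) = cls (seg z 0 (Bw k)).
  by rewrite -(concat_pref z'us) -(concat_pref zws); exact: cls_flatten.
exists (cls (seg z 0 (Bw (kap 1))), X); split=> //.
apply/cwInf; exists (fun a => Bu (kap a.+1)); split.
- move=> a; rewrite ltnNge; apply/negP => /seg_nil z'0.
  move: (blocks _ _ (ltnW (inckap a.+1))); rewrite z'0 => /esym/cls_nil/seg_nil.
  by rewrite leqNgt incB.
- by apply/mem_cls/cls_eq; rewrite prefix.
- move=> a; rewrite (memE (unifX a.+1 a.+2 (ltnSn _))).
  by apply/mem_cls/cls_eq; rewrite blocks // ltnW.
Qed.

Lemma omega_witness (U : lang Sigma) p w : calC p -> cw p w ->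
  omega (gammaS delta F (alphaS U)) w ->
  exists p' y, [/\ calC p', cw p' w, cw p' y & omega U y].
Proof.
move=> Cp pw [ws [wsU wsw]].
have [us usE] : exists us, forall i, U (us i) /\ cls (us i) = cls (ws i).
  apply: (choice (fun i u => U u /\ cls u = cls (ws i))) => i.
  have [C [[u [Cu Uu]] Cwsi]] := wsU i.
  by exists u; split=> //; rewrite -(memE Cu) (memE Cwsi).
have Uus i : U (us i) by exact: (usE i).1.
have clsus i : cls (us i) = cls (ws i) by exact: (usE i).2.
have us_nil i : us i = [::] <-> ws i = [::].
  by rewrite -(cls_nil (us i)) -(cls_nil (ws i)) clsus.
case: w pw wsw => [v|z] pw wsw.
  case: wsw => N [wsN vE]; exists p, (Fin (pref us N)); split=> //.
    case: p Cp pw => E D Cp /cwFin [D0 Ev]; apply/cwFin; split=> //.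
    by rewrite (memE Ev) vE; apply/mem_cls/cls_eq; exact: cls_flatten.
  by exists us; split=> //; exists N; split=> // i Ni; apply/us_nil/wsN.
have [z' z'us] : exists z', concat_inf us (Inf z').
  apply: concat_inf_ex => N; have [i Ni wsi] := wsw.1 N.
  by exists i => // /us_nil.
case: p Cp pw => E D Cp pw.
have [p' [Cp' zp' z'p']] := omega_transfer Cp pw wsw z'us clsus.
by exists p', (Inf z'); split=> //; exists us.
Qed.

Lemma alphaW_omega (U : lang Sigma) : alphaW (omega U) = omegaM delta F (alphaS U).
Proof.
apply: pred_ext => p; split.
  apply: alphaW_mono => w [ws [Uws wsw]]; exists ws; split=> // i.
  exact: gammaS_alphaS.
move: p; apply: alphaW_ind => [p [Cp [w [pw Vw]]]|p p' w]; last exact: alphaW_step.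
have [p' [y [Cp' p'w p'y Uy]]] := omega_witness Cp pw Vw.
by apply: (alphaW_step _ Cp pw p'w); apply: alphaW_base; split=> //; exists y.
Qed.

End Automaton.

Theorem theorem12 (Sigma Q : finType) (delta : Q -> Sigma -> {set Q})
    (q0 : Q) (F : {set Q}) :
  (* (1) *)
  [/\ alphaS delta F (fun _ => True) = (fun _ => True),
      alphaW delta F (fun _ => True) = calC delta F,
      alphaS delta F (fun _ => False) = (fun _ => False)
    & alphaW delta F (fun _ => False) = (fun _ => False)] /\
  (* (2) *)
  (forall (U U' : lang Sigma) (V V' : olang Sigma),
      alphaS delta F (fun w => U w \/ U' w)
        = (fun C => alphaS delta F U C \/ alphaS delta F U' C) /\
      alphaW delta F (fun w => V w \/ V' w)
        = (fun p => alphaW delta F V p \/ alphaW delta F V' p)) /\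
  (* (3) *)
  (forall (U U' : lang Sigma) (V : olang Sigma),
      alphaS delta F (catF U U') = mulM delta F (alphaS delta F U) (alphaS delta F U') /\
      alphaW delta F (catL U V) = mulMW delta F (alphaS delta F U) (alphaW delta F V)) /\
  (* (4) *)
  (forall (n : nat) (Phi : ('I_n -> lang Sigma) -> 'I_n -> lang Sigma)
          (Fop : ('I_n -> Cls delta F -> Prop) -> 'I_n -> Cls delta F -> Prop),
      0 < n -> monotone_op Phi -> monotone_op Fop ->
      (forall X, (fun i => alphaS delta F (Phi X i))
                 = Fop (fun i => alphaS delta F (X i))) ->
      (fun i => alphaS delta F (lfp Phi i)) = lfp Fop) /\
  (* (5) *)
  (forall U : lang Sigma,
      alphaW delta F (omega U) = omegaM delta F (alphaS delta F U)).
Proof.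
split; first exact: alpha_top_bot.
split; first exact: alpha_union.
split.
  move=> U U' V; split; first exact: alphaS_cat.
  by apply: pred_ext => p; split; [exact: alphaW_catL_sub|exact: alphaW_catL_sup].
split; last exact: alphaW_omega.
by move=> n Phi Fop _; exact: alphaS_lfp.
Qed.
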